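(* Let $H$ be a graph whose complement $\overline{H}$ is a co-bipartite circular arc graph. Then $H^*$ is a comparability graph.
   Context: A circular arc graph is the intersection graph of a finite family of arcs of a circle; a graph is co-bipartite if its vertex set can be partitioned into two cliques. For a graph $H$, the graph $H^*$ has vertex set $E(H)$, and two edges $wx$ and $yz$ of $H$ are adjacent in $H^*$ iff $\{w,x,y,z\}$ induces a $2K_2$ (two disjoint edges and no other edges) in $H$; equivalently $H^*$ is the complement of the square of the line graph of $H$. A comparability graph is a graph whose edges can be transitively oriented, i.e. it is the comparability graph of some partial order on its vertex set. *)

From mathcomp Require Import all_boot.
From Stdlib Require Import Reals ZArith.

Set Implicit Arguments.
Unset Strict Implicit.
Unset Printing Implicit Defensive.

(* A (finite simple) graph on T is a symmetric irreflexive e : rel T. *)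

Definition gcompl (T : finType) (e : rel T) : rel T :=
  fun x y => (x != y) && ~~ e x y.

Definition is_clique (T : finType) (e : rel T) (S : {set T}) : Prop :=
  forall x y, x \in S -> y \in S -> x != y -> e x y.

Definition cobipartite (T : finType) (e : rel T) : Prop :=
  exists S : {set T}, is_clique e S /\ is_clique e (~: S).

(* The circle is R/Z.  The closed arc starting at a of length l >= 0
   (going counterclockwise) contains t iff some integer translate of t
   lies in [a, a + l]  (l >= 1 gives the whole circle). *)
Definition on_arc (a l t : R) : Prop :=
  exists k : Z, (a <= t + IZR k <= a + l)%R.

Definition circular_arc_graph (T : finType) (e : rel T) : Prop :=
  exists (A L : T -> R),
    (forall v, (0 <= L v)%R) /\
    (forall u v, u != v ->
       (e u v <-> exists t : R, on_arc (A u) (L u) t /\ on_arc (A v) (L v) t)).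

Definition is_edge (T : finType) (e : rel T) (S : {set T}) : bool :=
  [exists x, exists y, [&& x != y, e x y & S == [set x; y]]].

Definition edge_type (T : finType) (e : rel T) : Type :=
  { S : {set T} | is_edge e S }.

(* H^* : edges wx and yz are adjacent iff {w,x,y,z} induces a 2K2 in H,
   i.e. the two edges are vertex-disjoint and no edge of H joins them. *)
Definition star_rel (T : finType) (e : rel T) : rel (edge_type e) :=
  fun E1 E2 =>
    [disjoint sval E1 & sval E2] &&
    [forall x in sval E1, forall y in sval E2, ~~ e x y].

Arguments star_rel {T} e.

Definition comparability_graph (V : Type) (E : rel V) : Prop :=
  exists o : rel V,
    (forall u v, o u v -> E u v) /\
    (forall u v, E u v -> o u v || o v u) /\
    (forall u v, o u v -> ~~ o v u) /\
    (forall u v w, o u v -> o v w -> o u w).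

(* The complement of H being co-bipartite with cliques S and ~: S, the graph H
   is bipartite: every edge xy has x in S, y outside S, and disjoint arcs,
   whereas any two arcs on the same side meet.  Two such edges xy and x'y' are
   adjacent in H^* exactly when the arcs of x, y' meet and those of x', y meet.
   Measure positions on the circle from a base point z and orient xy -> x'y'
   when min(pos x, pos y) < min(pos x', pos y').  For adjacent edges the arc
   constraints force these minima to differ and the edges to interleave:
   min < min' < max < max'.  Choosing z among the arc starts so as to minimise
   the number of edges with pos x < pos y (rebasing at a suitable start would
   otherwise decrease it) rules out an edge lying entirely before another one,
   and this in turn rules out any failure of transitivity along an
   interleaved chain of three edges. *)

From mathcomp Require Import all_boot.
From Stdlib Require Import Reals Lra Lia ZArith.

Set Implicit Arguments.
Unset Strict Implicit.
Unset Printing Implicit Defensive.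

Section CirclePositions.
Local Open Scope R_scope.

(* The position of a on R/Z counted from z, in (0, 1]: z itself sits at 1. *)
Definition circ_pos (z a : R) : R := 1 - frac_part (z - a).

Lemma circ_pos_range z a : 0 < circ_pos z a <= 1.
Proof. rewrite /circ_pos; have := base_fp (z - a); lra. Qed.

Lemma circ_pos_self z : circ_pos z z = 1.
Proof. by rewrite /circ_pos Rminus_diag fp_R0 Rminus_0_r. Qed.

Definition rebase (w v : R) : R := if Rlt_dec w v then v - w else v - w + 1.

Lemma circ_pos_rebase z w a : circ_pos w a = rebase (circ_pos z w) (circ_pos z a).
Proof.
  rewrite /circ_pos /rebase.
  replace (w - a) with ((z - a) - (z - w)) by ring.
  case: Rlt_dec => ?; [rewrite Rminus_fp2 /= | rewrite Rminus_fp1 /=]; lra.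
Qed.

Lemma frac_part_circ_pos z a b :
  frac_part (b - a) =
  if Rle_dec (circ_pos z a) (circ_pos z b) then circ_pos z b - circ_pos z a
  else circ_pos z b - circ_pos z a + 1.
Proof.
  rewrite /circ_pos.
  replace (b - a) with ((z - a) - (z - b)) by ring.
  case: Rle_dec => ?; [rewrite Rminus_fp1 /= | rewrite Rminus_fp2 /=]; lra.
Qed.

End CirclePositions.

Section ArcConfigurations.
Local Open Scope R_scope.

(* Arcs of lengths a, b starting at positions p, q in (0, 1] meet: one of them
   reaches the start of the other, possibly after wrapping past 1. *)
Definition arcs_meet (p a q b : R) : Prop :=
  (p <= q /\ (q - p <= a \/ 1 - (q - p) <= b)) \/
  (q < p /\ (q - p + 1 <= a \/ p - q <= b)).

Definition arcs_meet_ordered (p a q b : R) : Prop := q <= p + a \/ p + 1 <= q + b.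

Definition arcs_apart (p a q b : R) : Prop :=
  [/\ 0 < p <= 1, 0 < q <= 1, 0 <= a, 0 <= b & ~ arcs_meet p a q b].

Lemma arcs_meet_lt p a q b : p < q -> arcs_meet p a q b -> arcs_meet_ordered p a q b.
Proof. rewrite /arcs_meet /arcs_meet_ordered; lra. Qed.

Lemma arcs_meet_gt p a q b : q < p -> arcs_meet p a q b -> arcs_meet_ordered q b p a.
Proof. rewrite /arcs_meet /arcs_meet_ordered; lra. Qed.

Lemma arcs_nmeet_lt p a q b : p < q -> ~ arcs_meet p a q b -> p + a < q /\ q + b < p + 1.
Proof. rewrite /arcs_meet; lra. Qed.

Lemma arcs_nmeet_gt p a q b : q < p -> ~ arcs_meet p a q b -> q + b < p /\ p + a < q + 1.
Proof. rewrite /arcs_meet; lra. Qed.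

Lemma arcs_meet_refl p a : 0 <= a -> arcs_meet p a p a.
Proof. rewrite /arcs_meet; lra. Qed.

Lemma arcs_apart_neq p a q b : arcs_apart p a q b -> p <> q.
Proof. by case=> _ _ Ha _ Hn Epq; apply: Hn; rewrite /arcs_meet Epq; lra. Qed.

Lemma on_arc_meet_frac a l b m : 0 <= l -> 0 <= m ->
  (exists t, on_arc a l t /\ on_arc b m t) <->
  frac_part (b - a) <= l \/ 1 - frac_part (b - a) <= m.
Proof.
  move=> Hl Hm.
  have Hd := Rplus_Int_part_frac_part (b - a); have Hb := base_fp (b - a).
  set n := Int_part (b - a) in Hd *; set d := frac_part (b - a) in Hd Hb *.
  clearbody n d; split.
  - case=> t [[k1 H1] [k2 H2]].
    have [Hj|Hj] := Z.le_gt_cases (k2 - k1 - n) 0.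
    + apply IZR_le in Hj; rewrite !minus_IZR in Hj; left; lra.
    + have /IZR_le : (1 <= k2 - k1 - n)%Z by lia.
      rewrite !minus_IZR; right; lra.
  - case=> H.
    + exists b; split; [exists (- n)%Z; rewrite opp_IZR | exists 0%Z]; simpl; lra.
    + exists a; split; [exists 0%Z | exists (n + 1)%Z; rewrite plus_IZR]; simpl; lra.
Qed.

Lemma on_arc_meetE z a l b m : 0 <= l -> 0 <= m ->
  (exists t, on_arc a l t /\ on_arc b m t) <->
  arcs_meet (circ_pos z a) l (circ_pos z b) m.
Proof.
  move=> Hl Hm; rewrite on_arc_meet_frac // (frac_part_circ_pos z).
  have := circ_pos_range z a; have := circ_pos_range z b.
  rewrite /arcs_meet; case: Rle_dec => /=; lra.
Qed.

(* In the configurations below, a pair of apart arcs (px, a), (py, b) stands for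
   an edge xy of H with x in S; arcs on the same side of S always meet. *)
Ltac unpack_apart :=
  repeat match goal with
  | H : arcs_apart _ _ _ _ |- _ =>
      have := arcs_apart_neq H; case: H => [? ? ? ? ?] ?
  end.

Ltac order_meets :=
  repeat match goal with
  | H : arcs_meet ?p _ ?q _ |- _ =>
      first [ apply arcs_meet_lt in H; [|lra] | apply arcs_meet_gt in H; [|lra]
            | assert (p = q) by lra; clear H | destruct (Rtotal_order p q) as [?|[?|?]] ]
  | H : ~ arcs_meet ?p _ ?q _ |- _ =>
      first [ apply arcs_nmeet_lt in H; [|lra] | apply arcs_nmeet_gt in H; [|lra] ]
  end;
  repeat match goal with H : _ /\ _ |- _ => destruct H end.

Ltac lra_meet_cases :=
  first [ lra | match goal with H : arcs_meet_ordered _ _ _ _ |- _ =>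
                  destruct H as [H|H]; lra_meet_cases end ].

Lemma cross_meet_interleave px a py b qx c qy d :
  arcs_apart px a py b -> arcs_apart qx c qy d ->
  arcs_meet px a qx c -> arcs_meet py b qy d ->
  arcs_meet px a qy d -> arcs_meet qx c py b ->
  Rmin px py <> Rmin qx qy /\
  (Rmin px py < Rmin qx qy -> Rmin qx qy < Rmax px py < Rmax qx qy).
Proof.
  rewrite /Rmin /Rmax => *; unpack_apart.
  destruct (Rle_dec px py); destruct (Rle_dec qx qy);
  destruct (Rle_dec px qx); destruct (Rle_dec py qy); destruct (Rle_dec px qy); destruct (Rle_dec qx py);
  (split; [intro; order_meets; lra_meet_cases | intro; order_meets; split; lra_meet_cases]).
Qed.

Lemma interleaved_chain_first_last px1 py1 px2 py2 px3 py3 a1 b1 a2 b2 a3 b3 :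
  arcs_apart px1 a1 py1 b1 -> arcs_apart px2 a2 py2 b2 -> arcs_apart px3 a3 py3 b3 ->
  arcs_meet px1 a1 px2 a2 -> arcs_meet px2 a2 px3 a3 -> arcs_meet px1 a1 px3 a3 ->
  arcs_meet py1 b1 py2 b2 -> arcs_meet py2 b2 py3 b3 -> arcs_meet py1 b1 py3 b3 ->
  arcs_meet px1 a1 py2 b2 -> arcs_meet px2 a2 py1 b1 ->
  arcs_meet px2 a2 py3 b3 -> arcs_meet px3 a3 py2 b2 ->
  Rmin px1 py1 < Rmin px2 py2 < Rmin px3 py3 ->
  Rmin px3 py3 < Rmax px1 py1 ->
  Rmax px1 py1 < Rmax px2 py2 < Rmax px3 py3 ->
  arcs_apart px1 a1 py3 b3 ->
  Rmin px1 py3 < Rmax px1 py1 -> Rmin px1 py3 < Rmax px2 py2 -> Rmin px1 py3 < Rmax px3 py3 ->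
  Rmin px1 py1 < Rmax px1 py3 -> Rmin px2 py2 < Rmax px1 py3 -> Rmin px3 py3 < Rmax px1 py3 ->
  False.
Proof.
  rewrite /Rmin /Rmax => *; unpack_apart.
  destruct (Rle_dec px1 py1); destruct (Rle_dec px2 py2); destruct (Rle_dec px3 py3);
  destruct (Rle_dec px1 py3); order_meets; lra_meet_cases.
Qed.

Lemma interleaved_chain_last_first px1 py1 px2 py2 px3 py3 a1 b1 a2 b2 a3 b3 :
  arcs_apart px1 a1 py1 b1 -> arcs_apart px2 a2 py2 b2 -> arcs_apart px3 a3 py3 b3 ->
  arcs_meet px1 a1 px2 a2 -> arcs_meet px2 a2 px3 a3 -> arcs_meet px1 a1 px3 a3 ->
  arcs_meet py1 b1 py2 b2 -> arcs_meet py2 b2 py3 b3 -> arcs_meet py1 b1 py3 b3 ->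
  arcs_meet px1 a1 py2 b2 -> arcs_meet px2 a2 py1 b1 ->
  arcs_meet px2 a2 py3 b3 -> arcs_meet px3 a3 py2 b2 ->
  Rmin px1 py1 < Rmin px2 py2 < Rmin px3 py3 ->
  Rmin px3 py3 < Rmax px1 py1 ->
  Rmax px1 py1 < Rmax px2 py2 < Rmax px3 py3 ->
  arcs_apart px3 a3 py1 b1 ->
  Rmin px3 py1 < Rmax px1 py1 -> Rmin px3 py1 < Rmax px2 py2 -> Rmin px3 py1 < Rmax px3 py3 ->
  Rmin px1 py1 < Rmax px3 py1 -> Rmin px2 py2 < Rmax px3 py1 -> Rmin px3 py3 < Rmax px3 py1 ->
  False.
Proof.
  rewrite /Rmin /Rmax => *; unpack_apart.
  destruct (Rle_dec px1 py1); destruct (Rle_dec px2 py2); destruct (Rle_dec px3 py3);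
  destruct (Rle_dec px3 py1); order_meets; lra_meet_cases.
Qed.

Lemma rebase_keeps_reversed px py a b qx qy c d gx gy g h :
  arcs_apart px a py b -> arcs_apart qx c qy d -> arcs_apart gx g gy h ->
  arcs_meet gx g qx c -> arcs_meet gy h py b ->
  py < px -> qx < qy -> qy <= py -> gy < gx ->
  ~ rebase qx gx < rebase qx gy.
Proof.
  rewrite /rebase => *; intro; unpack_apart.
  destruct (Rlt_dec qx gx); destruct (Rlt_dec qx gy); simpl in *;
  destruct (Rle_dec gx qx); destruct (Rle_dec gy py); order_meets; lra_meet_cases.
Qed.

Lemma rebase_keeps_reversed_inner px py a b qx qy c d gx gy g h w :
  arcs_apart px a py b -> arcs_apart qx c qy d -> arcs_apart gx g gy h ->
  arcs_meet gx g qx c -> arcs_meet gy h py b ->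
  py < px -> qx < qy -> px <= qx -> gy < gx ->
  qx <= w < qy -> (qx <= gx < qy -> gx <= w) ->
  ~ rebase w gx < rebase w gy.
Proof.
  rewrite /rebase => *; intro; unpack_apart.
  destruct (Rlt_dec w gx); destruct (Rlt_dec w gy); simpl in *;
  destruct (Rle_dec gx qx); destruct (Rle_dec gy py); destruct (Rle_dec gx qy);
  order_meets; lra_meet_cases.
Qed.

Lemma unnested_min_lt_max px py a b qx qy c d :
  arcs_apart px a py b -> arcs_apart qx c qy d ->
  arcs_meet px a qx c -> arcs_meet py b qy d ->
  (py < px -> qx < qy -> py < qy /\ qx < px) ->
  (px < py -> qy < qx -> px < qx /\ qy < py) ->
  Rmin px py < Rmax qx qy.
Proof.
  rewrite /Rmin /Rmax => ? ? ? ? Hrev Hfwd; unpack_apart.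
  destruct (Rle_dec px py); destruct (Rle_dec qx qy);
  destruct (Rle_dec px qx); destruct (Rle_dec py qy);
  try (destruct Hrev; [lra|lra|]); try (destruct Hfwd; [lra|lra|]);
  order_meets; lra_meet_cases.
Qed.

End ArcConfigurations.

Definition Rltb (x y : R) : bool := if Rlt_dec x y then true else false.

Lemma RltbP (x y : R) : reflect (x < y)%R (Rltb x y).
Proof. by rewrite /Rltb; case: Rlt_dec => H; constructor. Qed.

Lemma seq_Rmax_attained (U : eqType) (f : U -> R) (s : seq U) x0 : x0 \in s ->
  exists2 w, w \in s & forall v, v \in s -> (f v <= f w)%R.
Proof.
  elim: s x0 => [|a s IH] x0 // _; case: s IH => [|b s] IH.
  - by exists a => [|v]; rewrite ?mem_seq1 // => /eqP ->; apply: Rle_refl.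
  - have [w Hw Hmax] := IH b (mem_head b s).
    case: (Rle_dec (f a) (f w)) => Ha.
    + exists w => [|v]; first by rewrite inE Hw orbT.
      by rewrite inE => /predU1P [->|/Hmax].
    + exists a => [|v]; first exact: mem_head.
      rewrite inE => /predU1P [->|/Hmax]; [apply: Rle_refl | lra].
Qed.

Section StarOrientation.
Variables (T : finType) (e : rel T) (S : {set T}) (A L : T -> R).
Hypothesis esym : symmetric e.
Hypothesis eirr : irreflexive e.
Hypothesis cliqueS : is_clique (gcompl e) S.
Hypothesis cliqueCS : is_clique (gcompl e) (~: S).
Hypothesis L_ge0 : forall v, (0 <= L v)%R.
Hypothesis arcs_of_gcompl : forall u v, u != v ->
  (gcompl e u v <-> exists t : R, on_arc (A u) (L u) t /\ on_arc (A v) (L v) t).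

Definition xyedge (x y : T) : bool := [&& x \in S, y \notin S & e x y].

Definition pos (t : R) (v : T) : R := circ_pos t (A v).

Definition meets (t : R) (u v : T) : Prop := arcs_meet (pos t u) (L u) (pos t v) (L v).

Lemma pos_range t v : (0 < pos t v <= 1)%R.
Proof. exact: circ_pos_range. Qed.

Lemma neq_in_notin x y : x \in S -> y \notin S -> x != y.
Proof. by move=> Hx Hy; apply: contraNneq Hy => <-. Qed.

Lemma gcompl_meets t u v : u != v -> gcompl e u v <-> meets t u v.
Proof. by move=> Huv; rewrite arcs_of_gcompl //; apply: on_arc_meetE. Qed.

Lemma meets_in_S t x x' : x \in S -> x' \in S -> meets t x x'.
Proof.
  move=> Hx Hx'; have [->|Hn] := eqVneq x x'; first exact: arcs_meet_refl.
  by apply/(gcompl_meets t Hn); apply: cliqueS.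
Qed.

Lemma meets_notin_S t y y' : y \notin S -> y' \notin S -> meets t y y'.
Proof.
  move=> Hy Hy'; have [->|Hn] := eqVneq y y'; first exact: arcs_meet_refl.
  by apply/(gcompl_meets t Hn); apply: cliqueCS; rewrite ?inE.
Qed.

Lemma meets_nedge t x y : x \in S -> y \notin S -> meets t x y <-> ~~ e x y.
Proof.
  move=> Hx Hy; rewrite -(gcompl_meets t (neq_in_notin Hx Hy)).
  by rewrite /gcompl neq_in_notin.
Qed.

Lemma xyedge_S x y : xyedge x y -> x \in S /\ y \notin S.
Proof. by case/and3P. Qed.

Lemma xyedge_apart t x y : xyedge x y -> arcs_apart (pos t x) (L x) (pos t y) (L y).
Proof.
  case/and3P=> Hx Hy Exy.
  split; [exact: pos_range | exact: pos_range | exact: L_ge0 | exact: L_ge0 |].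
  by move/(meets_nedge t Hx Hy); rewrite Exy.
Qed.

Lemma pos_rebase z w v : pos (A w) v = rebase (pos z w) (pos z v).
Proof. exact: circ_pos_rebase. Qed.

Definition forward (t : R) : {set T * T} :=
  [set p | xyedge p.1 p.2 && Rltb (pos t p.1) (pos t p.2)].

Definition nforward (t : R) : nat := #|forward t|.

Lemma nforward_lt z t x y :
  (forall gx gy, xyedge gx gy -> (pos t gx < pos t gy)%R -> (pos z gx < pos z gy)%R) ->
  xyedge x y -> (pos z x < pos z y)%R -> ~ (pos t x < pos t y)%R ->
  nforward t < nforward z.
Proof.
  move=> fwd_tz Exy Hz Ht; apply: proper_card; rewrite properE; apply/andP; split.
  - apply/subsetP => -[gx gy]; rewrite !inE /= => /andP [G /RltbP Hg].
    by rewrite G; apply/RltbP; apply: fwd_tz.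
  - apply/subsetPn; exists (x, y); rewrite !inE /= Exy.
    + exact/RltbP.
    + exact/RltbP.
Qed.


Lemma star_min_interleave t x y x' y' :
  xyedge x y -> xyedge x' y' -> meets t x y' -> meets t x' y ->
  Rmin (pos t x) (pos t y) <> Rmin (pos t x') (pos t y') /\
  ((Rmin (pos t x) (pos t y) < Rmin (pos t x') (pos t y'))%R ->
   (Rmin (pos t x') (pos t y') < Rmax (pos t x) (pos t y) < Rmax (pos t x') (pos t y'))%R).
Proof.
  move=> E F Hxy' Hx'y; have [Hx Hy] := xyedge_S E; have [Hx' Hy'] := xyedge_S F.
  apply: (cross_meet_interleave (xyedge_apart t E) (xyedge_apart t F)) => //.
  - exact: meets_in_S.
  - exact: meets_notin_S.
Qed.

Lemma nedge_in_S a b : a \in S -> b \in S -> ~~ e a b.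
Proof.
  move=> Ha Hb; have [->|Hn] := eqVneq a b; first by rewrite eirr.
  by have := cliqueS Ha Hb Hn; rewrite /gcompl => /andP [].
Qed.

Lemma nedge_notin_S a b : a \notin S -> b \notin S -> ~~ e a b.
Proof.
  move=> Ha Hb; have [->|Hn] := eqVneq a b; first by rewrite eirr.
  by have := @cliqueCS a b; rewrite /gcompl !inE => /(_ Ha Hb Hn) /andP [].
Qed.

Lemma edge_type_xyedge (E : edge_type e) : exists x y, xyedge x y /\ sval E = [set x; y].
Proof.
  case: E => _ /= /existsP [u /existsP [v /and3P [_ Euv /eqP ->]]].
  case Hu: (u \in S); case Hv: (v \in S).
  - by move: (nedge_in_S Hu Hv); rewrite Euv.
  - by exists u, v; rewrite /xyedge Hu Hv Euv.
  - by exists v, u; rewrite /xyedge Hu Hv esym Euv setUC.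
  - by move: (@nedge_notin_S u v); rewrite Hu Hv Euv => /(_ isT isT).
Qed.

Definition key (t : R) (E : edge_type e) : R :=
  match [pick x in sval E | x \in S], [pick y in sval E | y \notin S] with
  | Some x, Some y => Rmin (pos t x) (pos t y)
  | _, _ => 0%R
  end.

Lemma key_xyedge t (E : edge_type e) x y : xyedge x y -> sval E = [set x; y] ->
  key t E = Rmin (pos t x) (pos t y).
Proof.
  move=> Exy DE; have [Hx Hy] := xyedge_S Exy.
  rewrite /key DE; case: pickP => [x0|]; last by move/(_ x); rewrite !inE eqxx Hx.
  rewrite !inE => /andP [/orP [/eqP ->|/eqP ->] Hx0]; last by rewrite Hx0 in Hy.
  case: pickP => [y0|]; last by move/(_ y); rewrite !inE eqxx orbT Hy.
  by rewrite !inE => /andP [/orP [/eqP ->|/eqP ->] Hy0] //; rewrite Hx in Hy0.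
Qed.

Lemma star_relE t (E1 E2 : edge_type e) x1 y1 x2 y2 :
  xyedge x1 y1 -> xyedge x2 y2 -> sval E1 = [set x1; y1] -> sval E2 = [set x2; y2] ->
  star_rel e E1 E2 <-> meets t x1 y2 /\ meets t x2 y1.
Proof.
  move=> F1 F2 D1 D2; have [Hx1 Hy1] := xyedge_S F1; have [Hx2 Hy2] := xyedge_S F2.
  rewrite /star_rel D1 D2 (meets_nedge t Hx1 Hy2) (meets_nedge t Hx2 Hy1); split.
  - case/andP=> _ /forall_inP nadj.
    have /forall_inP nadj1 := nadj x1 (set21 x1 y1).
    have /forall_inP nadj2 := nadj y1 (set22 x1 y1).
    split; first exact: nadj1 _ (set22 x2 y2).
    by rewrite esym; apply: nadj2 _ (set21 x2 y2).
  - case=> N12 N21; apply/andP; split.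
    + rewrite disjoint_subset; apply/subsetP => a; rewrite !inE.
      case/orP=> /eqP ->; apply/negP; case/orP=> /eqP Ea.
      * by move: F2; rewrite /xyedge -Ea (negbTE N12) !andbF.
      * by move: Hy2; rewrite -Ea Hx1.
      * by move: Hy1; rewrite Ea Hx2.
      * by move: F2; rewrite /xyedge -Ea (negbTE N21) !andbF.
    + apply/forall_inP => a; rewrite !inE => /orP [] /eqP ->;
      apply/forall_inP => b; rewrite !inE => /orP [] /eqP ->.
      * exact: nedge_in_S.
      * exact: N12.
      * by rewrite esym.
      * exact: nedge_notin_S.
Qed.

Section MinimalBase.
Variable z : R.
Hypothesis z_min : forall w, nforward z <= nforward (A w).

Lemma reversed_forward_nested x y x' y' :
  xyedge x y -> xyedge x' y' -> (pos z y < pos z x)%R -> (pos z x' < pos z y')%R ->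
  (pos z y < pos z y')%R /\ (pos z x' < pos z x)%R.
Proof.
  move=> E F Hyx Hxy'; have [_ Hy] := xyedge_S E; have [Hx' _] := xyedge_S F.
  have aE := xyedge_apart z E; have aF := xyedge_apart z F.
  have reversed_at gx gy : xyedge gx gy -> ~ (pos z gx < pos z gy)%R ->
      [/\ arcs_apart (pos z gx) (L gx) (pos z gy) (L gy), meets z gx x', meets z gy y
        & (pos z gy < pos z gx)%R].
    move=> Gg Hg; have aG := xyedge_apart z Gg; have [Hgx Hgy] := xyedge_S Gg.
    split; [done | exact: meets_in_S | exact: meets_notin_S |].
    by have := arcs_apart_neq aG; lra.
  case: (Rlt_dec (pos z y) (pos z y')) => Hyy'; last first.
    (* rebasing at x' makes F reversed and keeps every reversed edge reversed *)
    suff : nforward (A x') < nforward z by rewrite ltnNge z_min.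
    apply: (nforward_lt _ F Hxy'); last first.
      by have := pos_range (A x') y'; rewrite /pos circ_pos_self; lra.
    move=> gx gy G; rewrite !(pos_rebase z) => Hg.
    case: (Rlt_dec (pos z gx) (pos z gy)) => // /(reversed_at _ _ G) [aG Hgx Hgy Hrev].
    by exfalso; apply: (rebase_keeps_reversed aE aF aG Hgx Hgy _ _ _ _ Hg); lra.
  case: (Rlt_dec (pos z x') (pos z x)) => Hx'x; first by split.
  (* rebase at the last start in S before the end of F *)
  pose M := [pred v | [&& v \in S, ~~ Rltb (pos z v) (pos z x') & Rltb (pos z v) (pos z y')]].
  have Mx' : x' \in enum M.
    by rewrite mem_enum inE Hx' /=; apply/andP; split; apply/RltbP; lra.
  have [w] := seq_Rmax_attained (pos z) Mx'; rewrite mem_enum => Mw w_max.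
  case/and3P: Mw => _ /RltbP Hw1 /RltbP Hw2.
  suff : nforward (A w) < nforward z by rewrite ltnNge z_min.
  apply: (nforward_lt _ F Hxy'); last first.
    have := pos_range z x'; have := pos_range z y'.
    by rewrite !(pos_rebase z) /rebase; do 2!case: Rlt_dec => ? /=; lra.
  move=> gx gy G; rewrite !(pos_rebase z) => Hg.
  case: (Rlt_dec (pos z gx) (pos z gy)) => // /(reversed_at _ _ G) [aG Hgx Hgy Hrev].
  exfalso; apply: (rebase_keeps_reversed_inner aE aF aG Hgx Hgy _ _ _ _ _ _ Hg); try lra.
  move=> Hgin; apply: w_max; rewrite mem_enum inE (proj1 (xyedge_S G)) /=.
  by apply/andP; split; apply/RltbP; lra.
Qed.

Lemma xyedge_min_lt_max x y x' y' : xyedge x y -> xyedge x' y' ->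
  (Rmin (pos z x) (pos z y) < Rmax (pos z x') (pos z y'))%R.
Proof.
  move=> E F; have [Hx Hy] := xyedge_S E; have [Hx' Hy'] := xyedge_S F.
  apply: (unnested_min_lt_max (xyedge_apart z E) (xyedge_apart z F)).
  - exact: meets_in_S.
  - exact: meets_notin_S.
  - exact: reversed_forward_nested.
  - by move=> H1 H2; have [] := reversed_forward_nested F E H2 H1.
Qed.

Lemma interleaved_chain_meets x1 y1 x2 y2 x3 y3 :
  xyedge x1 y1 -> xyedge x2 y2 -> xyedge x3 y3 ->
  meets z x1 y2 -> meets z x2 y1 -> meets z x2 y3 -> meets z x3 y2 ->
  (Rmin (pos z x1) (pos z y1) < Rmin (pos z x2) (pos z y2) < Rmin (pos z x3) (pos z y3))%R ->
  meets z x1 y3 /\ meets z x3 y1.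
Proof.
  move=> E1 E2 E3 M12 M21 M23 M32 [K12 K23].
  have [Hx1 Hy1] := xyedge_S E1; have [Hx2 Hy2] := xyedge_S E2; have [Hx3 Hy3] := xyedge_S E3.
  have [_ /(_ K12) [C12 C12']] := star_min_interleave E1 E2 M12 M21.
  have [_ /(_ K23) [C23 C23']] := star_min_interleave E2 E3 M23 M32.
  have K31 := xyedge_min_lt_max E3 E1.
  have aE1 := xyedge_apart z E1; have aE2 := xyedge_apart z E2; have aE3 := xyedge_apart z E3.
  split.
  - case: (boolP (e x1 y3)) => [E13|N13]; last exact/(meets_nedge z Hx1 Hy3).
    have {}E13 : xyedge x1 y3 by rewrite /xyedge Hx1 Hy3.
    exfalso; apply: (interleaved_chain_first_last aE1 aE2 aE3 _ _ _ _ _ _ M12 M21 M23 M32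
                       _ _ _ (xyedge_apart z E13));
      first [exact: meets_in_S | exact: meets_notin_S | exact: xyedge_min_lt_max | lra].
  - case: (boolP (e x3 y1)) => [E31|N31]; last exact/(meets_nedge z Hx3 Hy1).
    have {}E31 : xyedge x3 y1 by rewrite /xyedge Hx3 Hy1.
    exfalso; apply: (interleaved_chain_last_first aE1 aE2 aE3 _ _ _ _ _ _ M12 M21 M23 M32
                       _ _ _ (xyedge_apart z E31));
      first [exact: meets_in_S | exact: meets_notin_S | exact: xyedge_min_lt_max | lra].
Qed.

Lemma comparability_star : comparability_graph (star_rel e).
Proof.
  exists (fun E1 E2 => star_rel e E1 E2 && Rltb (key z E1) (key z E2)).
  split; [|split; [|split]].
  - by move=> ? ? /andP [].
  - move=> E1 E2 S12.
    have [x1 [y1 [F1 D1]]] := edge_type_xyedge E1.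
    have [x2 [y2 [F2 D2]]] := edge_type_xyedge E2.
    have [M12 M21] := (star_relE z F1 F2 D1 D2).1 S12.
    have S21 : star_rel e E2 E1 by apply/(star_relE z F2 F1 D2 D1).
    have [Kneq _] := star_min_interleave F1 F2 M12 M21.
    rewrite S12 S21 (key_xyedge z F1 D1) (key_xyedge z F2 D2) /=.
    by case: (Rlt_dec (Rmin (pos z x1) (pos z y1)) (Rmin (pos z x2) (pos z y2))) => H;
      apply/orP; [left | right]; apply/RltbP; lra.
  - by move=> ? ? /andP [_ /RltbP ?]; apply/negP => /andP [_ /RltbP ?]; lra.
  - move=> E1 E2 E3 /andP [S12 /RltbP K12] /andP [S23 /RltbP K23].
    have [x1 [y1 [F1 D1]]] := edge_type_xyedge E1.
    have [x2 [y2 [F2 D2]]] := edge_type_xyedge E2.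
    have [x3 [y3 [F3 D3]]] := edge_type_xyedge E3.
    have [M12 M21] := (star_relE z F1 F2 D1 D2).1 S12.
    have [M23 M32] := (star_relE z F2 F3 D2 D3).1 S23.
    rewrite (key_xyedge z F1 D1) (key_xyedge z F2 D2) (key_xyedge z F3 D3) in K12 K23 *.
    have [M13 M31] := interleaved_chain_meets F1 F2 F3 M12 M21 M23 M32 (conj K12 K23).
    apply/andP; split; first exact/(star_relE z F1 F3 D1 D3).
    by apply/RltbP; lra.
Qed.

End MinimalBase.

End StarOrientation.

Theorem lemma4 (T : finType) (e : rel T) :
  symmetric e -> irreflexive e ->
  cobipartite (gcompl e) -> circular_arc_graph (gcompl e) ->
  comparability_graph (star_rel e).
Proof.
  move=> esym eirr [S [cliqueS cliqueCS]] [A [L [L_ge0 arcs_of_gcompl]]].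
  have comparability z := comparability_star esym eirr cliqueS cliqueCS L_ge0 arcs_of_gcompl (z := z).
  case: (pickP (@predT T)) => [t0 _|T0]; last by apply: (comparability 0%R) => w; have := T0 w.
  have [i _ i_min] := @arg_minnP T t0 predT (fun w => nforward e S A (A w)) isT.
  by apply: (comparability (A i)) => w; apply: i_min.
Qed.
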